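(* Let $\mathcal{F}=\langle\mathbb{A},(\mu_i)_{i\in\mathsf{Ag}}\rangle$ be an APE-structure and $\mathbb{E}=(E,(\sim_i),(P_i),\Phi,\mathsf{pre})$ a probabilistic event structure over $\mathbb{A}$. Then the intermediate structure $\prod_{\mathbb{E}}\mathcal{F}=\langle\prod_{\mathbb{E}}\mathbb{A},(\mu'_i)_{i\in\mathsf{Ag}}\rangle$ is an ApPE-structure. Furthermore, if $y\in\prod_{\mathbb{E}}\mathbb{A}$ satisfies $\bigvee_{a\in\Phi}a\leq y(e)$ for every $e\in E$, then $\mu'_i(x)=\mu'_i(x\wedge y)$ for every $x$ in the domain of $\mu'_i$.
   Context: Fix a set $\mathsf{Ag}$ of agents. A monadic Heyting algebra is a Heyting algebra $\mathbb{L}$ with, for each $i\in\mathsf{Ag}$, monotone unary operations $\lozenge_i,\Box_i$ such that for all $a,b$: $a\leq\lozenge_i a$; $\Box_i a\leq a$; $\lozenge_i(a\vee b)\leq\lozenge_i a\vee\lozenge_i b$; $\Box_i(a\to b)\leq\Box_i a\to\Box_i b$; $\lozenge_i a\leq\Box_i\lozenge_i a$; $\lozenge_i\Box_i a\leq\Box_i a$; $\Box_i(a\to b)\leq\lozenge_i a\to\lozenge_i b$; $\lozenge_i\bot\leq\bot$; $\top\leq\Box_i\top$. An epistemic Heyting algebra is a finite monadic Heyting algebra with $\lozenge_i a\vee\neg\lozenge_i a=\top$ for all $i,a$. An element $a$ is $i$-minimal if $a\neq\bot$, $\lozenge_i a=a$, and whenever $b<a$ and $\lozenge_i b=b$ then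 $b=\bot$; $\mathsf{Min}_i(\mathbb{A})$ is the set of $i$-minimal elements. A partial map $\mu:\mathbb{A}\to\mathbb{R}^+$ is an $i$-premeasure if: (1) $\mathsf{dom}(\mu)=\mathsf{Min}_i(\mathbb{A}){\downarrow}$; (2) $\mu$ is order-preserving; (3) for every $a\in\mathsf{Min}_i(\mathbb{A})$ and $b,c\leq a$, $\mu(b\vee c)=\mu(b)+\mu(c)-\mu(b\wedge c)$; (4) $\mu(\bot)=0$ if $\mathsf{dom}(\mu)\neq\varnothing$. It is an $i$-measure if also (5) for $a\in\mathsf{Min}_i(\mathbb{A})$ and $b<c\leq a$, $\mu(b)<\mu(c)$; (6) $\mu(a)=1$ for $a\in\mathsf{Min}_i(\mathbb{A})$. An ApPE-structure (resp. APE-structure) is $\langle\mathbb{A},(\mu_i)_{i\in\mathsf{Ag}}\rangle$ with $\mathbb{A}$ an epistemic Heyting algebra and each $\mu_i$ an $i$-premeasure (resp. $i$-measure). A pre-ordered multiset on $X$ is a multiset in which the copies $x_1,\dots,x_n$ of an element carry the linear order $x_1\prec\cdots\prec x_n$. A probabilistic event structure over $\mathbb{A}$ is $(E,(\sim_i),(P_i),\Phi,\mathsf{pre})$: $E$ non-empty finite; $\sim_i$ equivalence relations on $E$; $P_i:E\to\,]0,1]$ with $\sum\{P_i(e')\mid e'\sim_i e\}=1$; $\Phi$ a finite pre-ordered multiset on $\mathbb{A}$ such that any $a,b\in\Phi$ arising from distinct elements satisfy $a\wedge b=\bot$ or $a<b$ or $b<a$; $\mathsf{pre}(\bullet\mid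 a)$ a probability distribution on $E$ for each $a\in\Phi$; and if $\mathsf{pre}(e\mid a)=0$ then $\mathsf{pre}(e\mid b)=0$ for $b\in\Phi$ with $a<b$ (distinct elements) or $a\prec b$ (copies). For $a\in\Phi$, $\mathrm{mb}(a)$ is the set of maximal elements of $\Phi\cap({\downarrow}a\setminus\{a\})$, and $\mu^a_i(x):=\mu_i(x\wedge a)-\sum_{b\in\mathrm{mb}(a)}\mu_i(x\wedge b)$ for $x\in\mathsf{Min}_i(\mathbb{A}){\downarrow}$. The intermediate algebra $\prod_{\mathbb{E}}\mathbb{A}$ has as carrier all maps $f:E\to\mathbb{A}$, pointwise Heyting operations, $(\lozenge'_i f)(e)=\bigvee\{\lozenge_i f(e')\mid e'\sim_i e\}$ and $(\Box'_i f)(e)=\bigwedge\{\Box_i f(e')\mid e'\sim_i e\}$. The intermediate structure $\prod_{\mathbb{E}}\mathcal{F}$ equips it with $\mu'_i:\mathsf{Min}_i(\prod_{\mathbb{E}}\mathbb{A}){\downarrow}\to\mathbb{R}^+$, $\mu'_i(f)=\sum_{e\in E}\sum_{a\in\Phi}P_i(e)\cdot\mu^a_i(f(e))\cdot\mathsf{pre}(e\mid a)$ ($i$-minimality in $\prod_{\mathbb{E}}\mathbb{A}$ taken w.r.t. $\lozenge'_i$). *)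

From HB Require Import structures.
From mathcomp Require Import all_boot all_order all_algebra.
From mathcomp Require Import reals.

Set Implicit Arguments.
Unset Strict Implicit.
Unset Printing Implicit Defensive.

Import Order.TTheory GRing.Theory Num.Theory.
Local Open Scope ring_scope.

(* Raw signature of a Heyting algebra with agent-indexed modalities.
   The order is a boolean relation; the algebraic content is in the
   predicates below. *)
Record HAops (Ag : Type) (T : Type) := MkHAops {
  hle   : T -> T -> bool;
  hmeet : T -> T -> T;
  hjoin : T -> T -> T;
  himp  : T -> T -> T;
  hbot  : T;
  htop  : T;
  hdia  : Ag -> T -> T;
  hbox  : Ag -> T -> T }.

Section Algebra.
Variables (Ag : Type) (T : finType) (A : HAops Ag T).

Local Notation le := (hle A).
Local Notation meet := (hmeet A).
Local Notation join := (hjoin A).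
Local Notation imp := (himp A).
Local Notation bot := (hbot A).
Local Notation top := (htop A).
Local Notation dia := (hdia A).
Local Notation box := (hbox A).

Definition hlt (a b : T) : bool := le a b && (a != b).

Definition hneg (a : T) : T := imp a bot.

Definition is_heyting : Prop :=
  (forall a, le a a) /\
  (forall a b, le a b -> le b a -> a = b) /\
  (forall a b c, le a b -> le b c -> le a c) /\
  (forall a b, le (meet a b) a /\ le (meet a b) b) /\
  (forall a b c, le c a -> le c b -> le c (meet a b)) /\
  (forall a b, le a (join a b) /\ le b (join a b)) /\
  (forall a b c, le a c -> le b c -> le (join a b) c) /\
  (forall a, le bot a /\ le a top) /\
  (forall a b c, le (meet c a) b <-> le c (imp a b)).

Definition is_monadic : Prop :=
  is_heyting /\
  forall i : Ag,
  (forall a b, le a b -> le (dia i a) (dia i b)) /\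
  (forall a b, le a b -> le (box i a) (box i b)) /\
  (forall a, le a (dia i a)) /\
  (forall a, le (box i a) a) /\
  (forall a b, le (dia i (join a b)) (join (dia i a) (dia i b))) /\
  (forall a b, le (box i (imp a b)) (imp (box i a) (box i b))) /\
  (forall a, le (dia i a) (box i (dia i a))) /\
  (forall a, le (dia i (box i a)) (box i a)) /\
  (forall a b, le (box i (imp a b)) (imp (dia i a) (dia i b))) /\
  le (dia i bot) bot /\
  le top (box i top).

(* epistemic Heyting algebra (finiteness: T is a finType) *)
Definition is_epistemic : Prop :=
  is_monadic /\ forall i a, join (dia i a) (hneg (dia i a)) = top.

Definition iminimal (i : Ag) (a : T) : Prop :=
  [/\ a <> bot, dia i a = a &
      forall b, hlt b a -> dia i b = b -> b = bot].

Definition in_dom (i : Ag) (x : T) : Prop :=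
  exists a, iminimal i a /\ le x a.

Variable R : realType.

(* A partial map with domain Min_i(A)↓ is represented by a total map
   mu : T -> R of which only the values on in_dom i matter. *)
Definition is_premeasure (i : Ag) (mu : T -> R) : Prop :=
  [/\ (forall x, in_dom i x -> 0 <= mu x),
      (forall x y, in_dom i x -> in_dom i y -> le x y -> mu x <= mu y),
      (forall a b c, iminimal i a -> le b a -> le c a ->
         mu (join b c) = mu b + mu c - mu (meet b c)) &
      ((exists x, in_dom i x) -> mu bot = 0)].

Definition is_measure (i : Ag) (mu : T -> R) : Prop :=
  [/\ is_premeasure i mu,
      (forall a b c, iminimal i a -> hlt b c -> le c a -> mu b < mu c) &
      (forall a, iminimal i a -> mu a = 1)].

Definition is_ApPE (mu : Ag -> T -> R) : Prop :=
  is_epistemic /\ forall i, is_premeasure i (mu i).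

Definition is_APE (mu : Ag -> T -> R) : Prop :=
  is_epistemic /\ forall i, is_measure i (mu i).

End Algebra.

Section EventStructure.
Variables (Ag : Type) (T : finType) (A : HAops Ag T) (R : realType).
Variables (E : finType) (sim : Ag -> rel E) (P : Ag -> E -> R).
(* Phi: finite pre-ordered multiset on A, given as a list; the copies of
   an element are linearly ordered by their position in the list. *)
Variables (Phi : seq T) (pre : 'I_(size Phi) -> E -> R).

Local Notation le := (hle A).
Local Notation lt := (hlt A).
Local Notation meet := (hmeet A).

Definition phi (k : 'I_(size Phi)) : T := nth (hbot A) Phi k.

Definition is_prob_event_structure : Prop :=
  (0 < #|E|)%N/\
      (forall i, [/\ reflexive (sim i), symmetric (sim i) & transitive (sim i)])/\
      (forall i e, 0 < P i e <= 1)/\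
      (forall i e, \sum_(e' : E | sim i e' e) P i e' = 1)/\
      (forall k l : 'I_(size Phi), phi k != phi l ->
         [\/ meet (phi k) (phi l) = hbot A, lt (phi k) (phi l) | lt (phi l) (phi k)])/\
      (forall k e, 0 <= pre k e)/\
      (forall k, \sum_(e : E) pre k e = 1) /\
      (forall (k l : 'I_(size Phi)) e, pre k e = 0 ->
         (lt (phi k) (phi l) || ((phi k == phi l) && (k < l)%N)) ->
         pre l e = 0).

Definition maxbelow (b a : T) : bool :=
  lt b a && ~~ has (fun c => lt b c && lt c a) Phi.

Definition mu_loc (mu : T -> R) (a x : T) : R :=
  mu (meet x a) - \sum_(b <- undup Phi | maxbelow b a) mu (meet x b).

Definition prod_ops : HAops Ag {ffun E -> T} :=
  {| hle := fun f g : {ffun E -> T} => [forall e, hle A (f e) (g e)];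
     hmeet := fun f g : {ffun E -> T} => [ffun e => hmeet A (f e) (g e)];
     hjoin := fun f g : {ffun E -> T} => [ffun e => hjoin A (f e) (g e)];
     himp := fun f g : {ffun E -> T} => [ffun e => himp A (f e) (g e)];
     hbot := [ffun _ => hbot A];
     htop := [ffun _ => htop A];
     hdia := fun i (f : {ffun E -> T}) => [ffun e =>
               \big[hjoin A / hbot A]_(e' : E | sim i e' e) hdia A i (f e')];
     hbox := fun i (f : {ffun E -> T}) => [ffun e =>
               \big[hmeet A / htop A]_(e' : E | sim i e' e) hbox A i (f e')] |}.

Definition mu_prime (mu : Ag -> T -> R) (i : Ag) (f : {ffun E -> T}) : R :=
  \sum_(e : E) \sum_(k < size Phi)
     P i e * mu_loc (mu i) (phi k) (f e) * pre k e.

End EventStructure.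

(* The product algebra is built pointwise, its modalities taking joins (meets)
   over ~_i-classes, so every monadic axiom reduces to its counterpart in A.
   An i-minimal element of the product is, at every event, either bot or
   i-minimal in A; hence the domain of mu'_i lies pointwise in Min_i(A)↓.
   The maximal elements of Phi below a are pairwise disjoint, so
   mu^a_i(x) = mu_i(x ∧ a) - mu_i(x ∧ J_a) with J_a <= a their join, and
   modularity of mu_i makes mu^a_i monotone, nonnegative and modular; mu'_i,
   a nonnegative combination of the mu^a_i, inherits this.  Finally mu^a_i(x) depends on x ∧ a
   only, which gives mu'_i(x) = mu'_i(x ∧ y) once y lies above all of Phi. *)

From HB Require Import structures.
From mathcomp Require Import all_boot all_order all_algebra.
From mathcomp Require Import reals.
From mathcomp Require Import lra ring.

Set Implicit Arguments.
Unset Strict Implicit.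
Unset Printing Implicit Defensive.
Import Order.TTheory GRing.Theory Num.Theory.
Local Open Scope ring_scope.

Section HeytingTheory.
Variables (Ag : Type) (T : finType) (A : HAops Ag T).
Hypothesis HA : is_heyting A.
Local Notation le := (hle A).
Local Notation meet := (hmeet A).
Local Notation join := (hjoin A).
Local Notation imp := (himp A).
Local Notation bot := (hbot A).
Local Notation top := (htop A).

Lemma hle_refl a : le a a.
Proof. by case: HA. Qed.

Lemma hle_anti a b : le a b -> le b a -> a = b.
Proof. by case: HA => _ [anti _]; exact: anti. Qed.

Lemma hle_trans a b c : le a b -> le b c -> le a c.
Proof. by case: HA => _ [_ [trans _]]; exact: trans. Qed.

Lemma hmeet_lel a b : le (meet a b) a.
Proof. by case: HA => _ [_ [_ [/(_ a b) []]]]. Qed.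

Lemma hmeet_ler a b : le (meet a b) b.
Proof. by case: HA => _ [_ [_ [/(_ a b) []]]]. Qed.

Lemma hmeet_glb a b c : le c a -> le c b -> le c (meet a b).
Proof. by case: HA => _ [_ [_ [_ [glb _]]]]; exact: glb. Qed.

Lemma hjoin_gel a b : le a (join a b).
Proof. by case: HA => _ [_ [_ [_ [_ [/(_ a b) []]]]]]. Qed.

Lemma hjoin_ger a b : le b (join a b).
Proof. by case: HA => _ [_ [_ [_ [_ [/(_ a b) []]]]]]. Qed.

Lemma hjoin_lub a b c : le a c -> le b c -> le (join a b) c.
Proof. by case: HA => _ [_ [_ [_ [_ [_ [lub _]]]]]]; exact: lub. Qed.

Lemma hbot_le a : le bot a.
Proof. by case: HA => _ [_ [_ [_ [_ [_ [_ [/(_ a) []]]]]]]]. Qed.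

Lemma hle_top a : le a top.
Proof. by case: HA => _ [_ [_ [_ [_ [_ [_ [/(_ a) []]]]]]]]. Qed.

Lemma hle_imp a b c : le (meet c a) b <-> le c (imp a b).
Proof. by case: HA => _ [_ [_ [_ [_ [_ [_ [_ res]]]]]]]; exact: res. Qed.

Lemma hmeetC a b : meet a b = meet b a.
Proof. by apply: hle_anti; apply: hmeet_glb; rewrite ?hmeet_lel ?hmeet_ler. Qed.

Lemma hmeet_le2 a a' b b' : le a a' -> le b b' -> le (meet a b) (meet a' b').
Proof.
move=> aa' bb'; apply: hmeet_glb.
  exact: hle_trans (hmeet_lel _ _) aa'.
exact: hle_trans (hmeet_ler _ _) bb'.
Qed.

Lemma hjoin_le2 a a' b b' : le a a' -> le b b' -> le (join a b) (join a' b').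
Proof.
move=> aa' bb'; apply: hjoin_lub.
  exact: hle_trans aa' (hjoin_gel _ _).
exact: hle_trans bb' (hjoin_ger _ _).
Qed.

Lemma hmeetx0 a : meet a bot = bot.
Proof. by apply: hle_anti; rewrite ?hbot_le ?hmeet_ler. Qed.

Lemma hmeet0x a : meet bot a = bot.
Proof. by rewrite hmeetC hmeetx0. Qed.

Lemma hmeet_l a b : le a b -> meet a b = a.
Proof. by move=> ab; apply: hle_anti; rewrite ?hmeet_lel // hmeet_glb // hle_refl. Qed.

Lemma hmeetA a b c : meet a (meet b c) = meet (meet a b) c.
Proof.
apply: hle_anti; apply: hmeet_glb.
- exact: hmeet_le2 (hle_refl _) (hmeet_lel _ _).
- exact: hle_trans (hmeet_ler _ _) (hmeet_ler _ _).
- exact: hle_trans (hmeet_lel _ _) (hmeet_lel _ _).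
- exact: hmeet_le2 (hmeet_ler _ _) (hle_refl _).
Qed.

Lemma hmeetIIr b c d : meet (meet b d) (meet c d) = meet (meet b c) d.
Proof.
apply: hle_anti; apply: hmeet_glb.
- exact: hmeet_le2 (hmeet_lel _ _) (hmeet_lel _ _).
- exact: hle_trans (hmeet_ler _ _) (hmeet_ler _ _).
- exact: hmeet_le2 (hmeet_lel _ _) (hle_refl _).
- exact: hmeet_le2 (hmeet_ler _ _) (hle_refl _).
Qed.

(* Distributivity holds because [meet z] is left adjoint to [imp z]. *)
Lemma hmeetUr z b c : meet z (join b c) = join (meet z b) (meet z c).
Proof.
apply: hle_anti; last first.
  by apply: hjoin_lub; apply: hmeet_le2; rewrite ?hle_refl ?hjoin_gel ?hjoin_ger.
rewrite hmeetC; apply/hle_imp; apply: hjoin_lub; apply/hle_imp; rewrite hmeetC.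
  exact: hjoin_gel.
exact: hjoin_ger.
Qed.

Lemma hmeetUl b c z : meet (join b c) z = join (meet b z) (meet c z).
Proof. by rewrite hmeetC hmeetUr !(hmeetC z). Qed.

Section BigOps.
Variables (I : eqType) (r : seq I) (P : pred I).

Lemma hbigjoin_ub (F : I -> T) j :
  j \in r -> P j -> le (F j) (\big[join/bot]_(i <- r | P i) F i).
Proof.
elim: r => // x s IHs; rewrite inE big_cons => /orP [/eqP <- -> | js Pj].
  exact: hjoin_gel.
case: ifP => _; last exact: IHs.
exact: hle_trans (IHs js Pj) (hjoin_ger _ _).
Qed.

Lemma hbigjoin_lub (F : I -> T) c :
  (forall i, P i -> le (F i) c) -> le (\big[join/bot]_(i <- r | P i) F i) c.
Proof.
move=> Fc; apply: (big_rec (fun x => le x c)); first exact: hbot_le.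
by move=> i x Pi xc; apply: hjoin_lub (Fc _ Pi) xc.
Qed.

Lemma hbigjoin_le2 (F G : I -> T) : (forall i, P i -> le (F i) (G i)) ->
  le (\big[join/bot]_(i <- r | P i) F i) (\big[join/bot]_(i <- r | P i) G i).
Proof.
move=> FG; apply: (big_rec2 (fun u v => le u v)); first exact: hle_refl.
by move=> i x y Pi xy; apply: hjoin_le2 (FG _ Pi) xy.
Qed.

Lemma hbigmeet_lb (F : I -> T) j :
  j \in r -> P j -> le (\big[meet/top]_(i <- r | P i) F i) (F j).
Proof.
elim: r => // x s IHs; rewrite inE big_cons => /orP [/eqP <- -> | js Pj].
  exact: hmeet_lel.
case: ifP => _; last exact: IHs.
exact: hle_trans (hmeet_ler _ _) (IHs js Pj).
Qed.

Lemma hbigmeet_glb (F : I -> T) c :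
  (forall i, P i -> le c (F i)) -> le c (\big[meet/top]_(i <- r | P i) F i).
Proof.
move=> cF; apply: (big_rec (fun x => le c x)); first exact: hle_top.
by move=> i x Pi cx; apply: hmeet_glb (cF _ Pi) cx.
Qed.

Lemma hbigmeet_le2 (F G : I -> T) : (forall i, P i -> le (F i) (G i)) ->
  le (\big[meet/top]_(i <- r | P i) F i) (\big[meet/top]_(i <- r | P i) G i).
Proof.
move=> FG; apply: (big_rec2 (fun u v => le u v)); first exact: hle_refl.
by move=> i x y Pi xy; apply: hmeet_le2 (FG _ Pi) xy.
Qed.

Lemma hmeet_bigjoin0 (F : I -> T) b :
  (forall i, i \in r -> P i -> meet b (F i) = bot) ->
  meet b (\big[join/bot]_(i <- r | P i) F i) = bot.
Proof.
elim: r => [|x s IHs] disj; first by rewrite big_nil hmeetx0.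
have disj_s : forall i, i \in s -> P i -> meet b (F i) = bot.
  by move=> i si; apply: disj; rewrite inE si orbT.
rewrite big_cons; case: ifP => Px; last exact: IHs.
rewrite hmeetUr disj ?inE ?eqxx // IHs //.
by apply: hle_anti; rewrite ?hbot_le // hjoin_lub ?hle_refl.
Qed.

End BigOps.
End HeytingTheory.

Section MonadicTheory.
Variables (Ag : Type) (T : finType) (A : HAops Ag T).
Hypothesis HM : is_monadic A.
Variable i : Ag.
Local Notation le := (hle A).
Local Notation meet := (hmeet A).
Local Notation join := (hjoin A).
Local Notation imp := (himp A).
Local Notation bot := (hbot A).
Local Notation top := (htop A).
Local Notation dia := (hdia A i).
Local Notation box := (hbox A i).

Lemma monadic_heyting : is_heyting A.
Proof. by case: HM. Qed.
Local Notation HA := monadic_heyting.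

Lemma hdia_le2 a b : le a b -> le (dia a) (dia b).
Proof. by case: HM => _ /(_ i) [+ _]; apply. Qed.

Lemma hbox_le2 a b : le a b -> le (box a) (box b).
Proof. by case: HM => _ /(_ i) [_ [+ _]]; apply. Qed.

Lemma hle_dia a : le a (dia a).
Proof. by case: HM => _ /(_ i) [_ [_ [+ _]]]; apply. Qed.

Lemma hbox_le a : le (box a) a.
Proof. by case: HM => _ /(_ i) [_ [_ [_ [+ _]]]]; apply. Qed.

Lemma hdia_join a b : le (dia (join a b)) (join (dia a) (dia b)).
Proof. by case: HM => _ /(_ i) [_ [_ [_ [_ [+ _]]]]]; apply. Qed.

Lemma hbox_imp a b : le (box (imp a b)) (imp (box a) (box b)).
Proof. by case: HM => _ /(_ i) [_ [_ [_ [_ [_ [+ _]]]]]]; apply. Qed.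

Lemma hdia_le_boxdia a : le (dia a) (box (dia a)).
Proof. by case: HM => _ /(_ i) [_ [_ [_ [_ [_ [_ [+ _]]]]]]]; apply. Qed.

Lemma hdiabox_le a : le (dia (box a)) (box a).
Proof. by case: HM => _ /(_ i) [_ [_ [_ [_ [_ [_ [_ [+ _]]]]]]]]; apply. Qed.

Lemma hbox_imp_dia a b : le (box (imp a b)) (imp (dia a) (dia b)).
Proof. by case: HM => _ /(_ i) [_ [_ [_ [_ [_ [_ [_ [_ [+ _]]]]]]]]]; apply. Qed.

Lemma hdia_bot : le (dia bot) bot.
Proof. by case: HM => _ /(_ i) [_ [_ [_ [_ [_ [_ [_ [_ [_ [+ _]]]]]]]]]]. Qed.

Lemma hbox_top : le top (box top).
Proof. by case: HM => _ /(_ i) [_ [_ [_ [_ [_ [_ [_ [_ [_ [_ +]]]]]]]]]]. Qed.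

Lemma hdia_box a : dia (box a) = box a.
Proof. by apply: (hle_anti HA); [exact: hdiabox_le | exact: hle_dia]. Qed.

Lemma hdia_id a : dia (dia a) = dia a.
Proof.
apply: (hle_anti HA) (hle_dia _).
apply: (hle_trans HA) (hdia_le2 (hdia_le_boxdia a)) _.
by rewrite hdia_box; exact: hbox_le.
Qed.

Lemma hbox_id a : box (box a) = box a.
Proof.
apply: (hle_anti HA) (hbox_le _) _.
by have := hdia_le_boxdia (box a); rewrite hdia_box.
Qed.

Lemma hbox_meet a b : le (meet (box a) (box b)) (box (meet a b)).
Proof.
apply/(hle_imp HA); apply: (hle_trans HA) _ (hbox_imp _ _).
by apply/hbox_le2/(hle_imp HA); exact: (hle_refl HA).
Qed.

Lemma hdia_bigjoin (I : Type) (r : seq I) (P : pred I) (F : I -> T) :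
  le (dia (\big[join/bot]_(j <- r | P j) F j)) (\big[join/bot]_(j <- r | P j) dia (F j)).
Proof.
apply: (big_rec2 (fun u v => le (dia u) v)); first exact: hdia_bot.
move=> j x y Pj xy; apply: (hle_trans HA) (hdia_join _ _) _.
exact: (hjoin_le2 HA (hle_refl HA _) xy).
Qed.

Lemma hbox_bigmeet (I : Type) (r : seq I) (P : pred I) (F : I -> T) :
  le (\big[meet/top]_(j <- r | P j) box (F j)) (box (\big[meet/top]_(j <- r | P j) F j)).
Proof.
apply: (big_rec2 (fun u v => le u (box v))); first exact: hbox_top.
move=> j x y Pj xy; apply: (hle_trans HA) _ (hbox_meet _ _).
exact: (hmeet_le2 HA (hle_refl HA _) xy).
Qed.

End MonadicTheory.

Section ProductAlgebra.
Variables (Ag : Type) (T : finType) (A : HAops Ag T) (E : finType) (sim : Ag -> rel E).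
Hypothesis HM : is_monadic A.
Hypothesis sim_equiv :
  forall i, [/\ reflexive (sim i), symmetric (sim i) & transitive (sim i)].
Local Notation le := (hle A).
Local Notation meet := (hmeet A).
Local Notation join := (hjoin A).
Local Notation bot := (hbot A).
Local Notation top := (htop A).
Local Notation dia := (hdia A).
Local Notation box := (hbox A).
Local Notation PA := (prod_ops A sim).
Local Notation HA := (monadic_heyting HM).

Lemma prod_leP (f g : {ffun E -> T}) :
  reflect (forall e, le (f e) (g e)) (hle PA f g).
Proof. exact: forallP. Qed.

Lemma sim_refl i e : sim i e e.
Proof. by case: (sim_equiv i). Qed.

Lemma sim_sym i e e' : sim i e e' = sim i e' e.
Proof. by case: (sim_equiv i) => _ simC _; exact: simC. Qed.

Lemma sim_classE i e e' : sim i e' e -> sim i^~ e' =1 sim i^~ e.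
Proof.
case: (sim_equiv i) => _ simC simT ee' x; apply/idP/idP => [xe'|xe].
  exact: simT ee'.
by apply: simT xe _; rewrite simC.
Qed.

Lemma hbigjoin_class_ub i (F : E -> T) e e' :
  sim i e' e -> le (F e') (\big[join/bot]_(x | sim i x e) F x).
Proof. exact: (hbigjoin_ub HA F (mem_index_enum e')). Qed.

Lemma hbigmeet_class_lb i (F : E -> T) e e' :
  sim i e' e -> le (\big[meet/top]_(x | sim i x e) F x) (F e').
Proof. exact: (hbigmeet_lb HA F (mem_index_enum e')). Qed.

Lemma hbigjoin_class_cst i e c : \big[join/bot]_(x | sim i x e) c = c.
Proof.
apply: (hle_anti HA); first by apply: (hbigjoin_lub HA) => *; exact: (hle_refl HA).
exact: (hbigjoin_class_ub (fun=> c) (sim_refl i e)).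
Qed.

Lemma prod_dia_class i (f : {ffun E -> T}) e e' :
  sim i e' e -> hdia PA i f e' = hdia PA i f e.
Proof. by move=> ee'; rewrite !ffunE; apply: eq_bigl => x; rewrite (sim_classE ee'). Qed.

Lemma prod_box_class i (f : {ffun E -> T}) e e' :
  sim i e' e -> hbox PA i f e' = hbox PA i f e.
Proof. by move=> ee'; rewrite !ffunE; apply: eq_bigl => x; rewrite (sim_classE ee'). Qed.

Lemma prod_dia_closed i (f : {ffun E -> T}) e : dia i (hdia PA i f e) = hdia PA i f e.
Proof.
rewrite ffunE; apply: (hle_anti HA) (hle_dia HM _ _).
apply: (hle_trans HA) (hdia_bigjoin HM _ _ _ _) _.
by apply: (hbigjoin_le2 HA) => x _; rewrite (hdia_id HM); exact: (hle_refl HA).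
Qed.

Lemma prod_box_closed i (f : {ffun E -> T}) e : box i (hbox PA i f e) = hbox PA i f e.
Proof.
rewrite ffunE; apply: (hle_anti HA) (hbox_le HM _ _) _.
apply: (hle_trans HA) _ (hbox_bigmeet HM _ _ _ _).
by apply: (hbigmeet_le2 HA) => x _; rewrite (hbox_id HM); exact: (hle_refl HA).
Qed.

Lemma prod_heyting : is_heyting PA.
Proof.
split; first by move=> a; apply/prod_leP => e; exact: (hle_refl HA).
split; first by move=> a b /prod_leP ab /prod_leP ba; apply/ffunP => e; exact: (hle_anti HA).
split.
  by move=> a b c /prod_leP ab /prod_leP bc; apply/prod_leP => e; exact: (hle_trans HA (ab e)).
split; first by move=> a b; split; apply/prod_leP => e; rewrite ffunE;
  [exact: (hmeet_lel HA) | exact: (hmeet_ler HA)].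
split.
  by move=> a b c /prod_leP ca /prod_leP cb; apply/prod_leP => e; rewrite ffunE; exact: (hmeet_glb HA).
split; first by move=> a b; split; apply/prod_leP => e; rewrite ffunE;
  [exact: (hjoin_gel HA) | exact: (hjoin_ger HA)].
split.
  by move=> a b c /prod_leP ac /prod_leP bc; apply/prod_leP => e; rewrite ffunE; exact: (hjoin_lub HA).
split; first by move=> a; split; apply/prod_leP => e; rewrite ffunE;
  [exact: (hbot_le HA) | exact: (hle_top HA)].
by move=> a b c; split=> /prod_leP le_abc; apply/prod_leP => e;
  have := le_abc e; rewrite !ffunE => /(hle_imp HA).
Qed.

Lemma prod_monadic : is_monadic PA.
Proof.
split; first exact: prod_heyting.
move=> i; have class_ub := @hbigjoin_class_ub i; have class_lb := @hbigmeet_class_lb i.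
split.
  move=> a b /prod_leP ab; apply/prod_leP => e; rewrite !ffunE.
  by apply: (hbigjoin_le2 HA) => x _; exact: hdia_le2.
split.
  move=> a b /prod_leP ab; apply/prod_leP => e; rewrite !ffunE.
  by apply: (hbigmeet_le2 HA) => x _; exact: hbox_le2.
split.
  move=> a; apply/prod_leP => e; rewrite ffunE.
  exact: (hle_trans HA (hle_dia HM _ _) (class_ub _ _ _ (sim_refl i e))).
split.
  move=> a; apply/prod_leP => e; rewrite ffunE.
  exact: (hle_trans HA (class_lb _ _ _ (sim_refl i e)) (hbox_le HM _ _)).
split.
  move=> a b; apply/prod_leP => e; rewrite !ffunE.
  apply: (hbigjoin_lub HA) => x xe; rewrite ffunE.
  apply: (hle_trans HA) (hdia_join HM _ _ _) _.
  by apply: (hjoin_le2 HA); exact: (class_ub (fun y => dia i (_ y))).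
split.
  move=> a b; apply/prod_leP => e; rewrite !ffunE; apply/(hle_imp HA).
  apply: (hbigmeet_glb HA) => x xe.
  have box_ab := class_lb (fun y => box i (himp PA a b y)) _ _ xe.
  have box_a := class_lb (fun y => box i (a y)) _ _ xe.
  apply: (hle_trans HA) (hmeet_le2 HA box_ab box_a) _; rewrite !ffunE.
  exact/(hle_imp HA)/hbox_imp.
split.
  move=> a; apply/prod_leP => e; rewrite [hbox PA i _ e]ffunE.
  apply: (hbigmeet_glb HA) => x xe; rewrite (prod_dia_class _ xe).
  by have := hdia_le_boxdia HM i (hdia PA i a e); rewrite prod_dia_closed.
split.
  move=> a; apply/prod_leP => e; rewrite [hdia PA i _ e]ffunE.
  apply: (hbigjoin_lub HA) => x xe; rewrite (prod_box_class _ xe).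
  by have := hdiabox_le HM i (hbox PA i a e); rewrite prod_box_closed.
split.
  move=> a b; apply/prod_leP => e; rewrite [himp PA _ _ e]ffunE.
  apply/(hle_imp HA); rewrite (hmeetC HA); apply/(hle_imp HA).
  rewrite [hdia PA i a e]ffunE; apply: (hbigjoin_lub HA) => x xe.
  apply/(hle_imp HA); rewrite (hmeetC HA).
  have box_ab : le (hbox PA i (himp PA a b) e) (box i (himp A (a x) (b x))).
    by rewrite ffunE; have := class_lb (fun y => box i (himp PA a b y)) _ _ xe; rewrite ffunE.
  have dia_b : le (dia i (b x)) (hdia PA i b e).
    by rewrite ffunE; exact: (class_ub (fun y => dia i (b y))).
  apply: (hle_trans HA) (hmeet_le2 HA box_ab (hle_refl HA _)) _.
  apply: (hle_trans HA) _ dia_b.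
  exact/(hle_imp HA)/hbox_imp_dia.
split.
  apply/prod_leP => e; rewrite !ffunE; apply: (hbigjoin_lub HA) => x _.
  by rewrite ffunE; exact: hdia_bot.
apply/prod_leP => e; rewrite !ffunE; apply: (hbigmeet_glb HA) => x _.
by rewrite ffunE; exact: hbox_top.
Qed.

Lemma prod_epistemic : is_epistemic A -> is_epistemic PA.
Proof.
case=> _ dia_decided; split; first exact: prod_monadic.
move=> i a; apply/ffunP => e; have := dia_decided i (hdia PA i a e).
by rewrite prod_dia_closed /hneg !ffunE.
Qed.

Lemma prod_iminimal_at i (f : {ffun E -> T}) e :
  iminimal PA i f -> f e <> bot -> iminimal A i (f e).
Proof.
case=> _ f_closed f_min fe_neq0.
have fE x : f x = hdia PA i f x by rewrite f_closed.
split=> //; first by rewrite fE prod_dia_closed.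
move=> b /andP [b_le b_neq] b_closed.
(* Lowering [f] to [b] on the [i]-class of [e] keeps it [dia]-closed. *)
pose g : {ffun E -> T} := [ffun x => if sim i x e then b else f x].
have g_lt : hlt PA g f.
  apply/andP; split.
    apply/prod_leP => x; rewrite ffunE; case: ifP => xe; last exact: (hle_refl HA).
    by rewrite fE (prod_dia_class _ xe) -fE.
  apply/eqP => /(congr1 (fun h : {ffun E -> T} => h e)); rewrite ffunE sim_refl => be.
  by rewrite be eqxx in b_neq.
have g_closed : hdia PA i g = g.
  apply/ffunP => x; rewrite [hdia PA i g x]ffunE [g x]ffunE; case: ifP => xe.
    rewrite -[RHS](hbigjoin_class_cst i x); apply: eq_bigr => y yx.
    by rewrite ffunE -(sim_classE xe) yx.
  rewrite fE ffunE; apply: eq_bigr => y yx; rewrite ffunE; case: ifP => // ye.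
  by move: xe; rewrite -(sim_classE ye) sim_sym yx.
have /(congr1 (fun h : {ffun E -> T} => h e)) := f_min g g_lt g_closed.
by rewrite !ffunE sim_refl.
Qed.

Lemma prod_iminimal_exists i (f : {ffun E -> T}) :
  iminimal PA i f -> exists m, iminimal A i m.
Proof.
move=> f_min; have [e /eqP fe_neq0|f_eq0] := pickP (fun e => f e != bot).
  by exists (f e); exact: prod_iminimal_at.
case: f_min => f_neq0 _ _; exfalso; apply: f_neq0; apply/ffunP => e.
by rewrite ffunE; move/negbFE/eqP: (f_eq0 e).
Qed.

Lemma in_dom_prod_iminimal i (f : {ffun E -> T}) e :
  iminimal PA i f -> in_dom A i (f e).
Proof.
move=> f_min; have [->|fe_neq0] := eqVneq (f e) bot.
  by have [m m_min] := prod_iminimal_exists f_min; exists m; split=> //; exact: (hbot_le HA).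
by exists (f e); split; [exact: prod_iminimal_at (elimN eqP fe_neq0) | exact: (hle_refl HA)].
Qed.

Lemma in_dom_prod i (x : {ffun E -> T}) e : in_dom PA i x -> in_dom A i (x e).
Proof.
case=> f [f_min /prod_leP x_le]; have [m [m_min fe_le]] := in_dom_prod_iminimal e f_min.
by exists m; split=> //; exact: (hle_trans HA (x_le e)).
Qed.

End ProductAlgebra.

Section LocalMeasure.
Variables (R : realType) (Ag : Type) (T : finType) (A : HAops Ag T).
Variables (i : Ag) (mu : T -> R) (m : T).
Hypothesis HA : is_heyting A.
Hypothesis mu_pre : is_premeasure A i mu.
Hypothesis m_min : iminimal A i m.
Local Notation le := (hle A).
Local Notation meet := (hmeet A).
Local Notation join := (hjoin A).
Local Notation bot := (hbot A).

Lemma premeasure0 : mu bot = 0.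
Proof.
case: mu_pre => _ _ _; apply; exists m, m; split=> //; exact: (hle_refl HA).
Qed.

Lemma premeasure_le x y : le x y -> le y m -> mu x <= mu y.
Proof.
move=> xy ym; case: mu_pre => _ mu_le _ _; apply: mu_le => //; last by exists m.
by exists m; split=> //; exact: (hle_trans HA xy).
Qed.

Lemma premeasureU b c : le b m -> le c m ->
  mu (join b c) = mu b + mu c - mu (meet b c).
Proof. by case: mu_pre => _ _ mu_mod _; exact: mu_mod. Qed.

Lemma premeasure_meetUl b c d : le b m -> le c m ->
  mu (meet (join b c) d) = mu (meet b d) + mu (meet c d) - mu (meet (meet b c) d).
Proof.
move=> bm cm; rewrite (hmeetUl HA) -(hmeetIIr HA); apply: premeasureU.
  exact: (hle_trans HA (hmeet_lel HA _ _) bm).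
exact: (hle_trans HA (hmeet_lel HA _ _) cm).
Qed.

Lemma premeasure_meet_bigjoin z (s : seq T) (P : pred T) : le z m -> uniq s ->
  {in s &, forall b b', P b -> P b' -> b != b' -> meet b b' = bot} ->
  \sum_(b <- s | P b) mu (meet z b) = mu (meet z (\big[join/bot]_(b <- s | P b) b)).
Proof.
move=> zm; elim: s => [|x s IHs] /=; first by rewrite !big_nil (hmeetx0 HA) premeasure0.
case/andP=> x_notin_s s_uniq disj.
have disj_s : {in s &, forall b b', P b -> P b' -> b != b' -> meet b b' = bot}.
  by move=> b b' bs b's; apply: disj; rewrite inE ?bs ?b's orbT.
rewrite !big_cons; case: ifP => Px; last exact: IHs.
rewrite IHs // (hmeetUr HA) premeasureU; try exact: (hle_trans HA (hmeet_lel HA _ _) zm).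
set J := \big[join/bot]_(b <- s | P b) b.
have xJ : meet x J = bot.
  apply: (hmeet_bigjoin0 HA) => b bs Pb; apply: disj; rewrite ?inE ?eqxx ?bs ?orbT //.
  by apply: contraNneq x_notin_s => ->.
suff -> : meet (meet z x) (meet z J) = bot by rewrite premeasure0 subr0.
apply: (hle_anti HA) (hbot_le HA _); rewrite -xJ.
exact: (hmeet_le2 HA (hmeet_ler HA z x) (hmeet_ler HA z J)).
Qed.

Variable Phi : seq T.
Hypothesis Phi_disjoint : forall a,
  {in Phi &, forall b b', maxbelow A Phi b a -> maxbelow A Phi b' a ->
     b != b' -> meet b b' = bot}.

Definition maxbelow_join (a : T) : T :=
  \big[join/bot]_(b <- undup Phi | maxbelow A Phi b a) b.

Lemma maxbelow_le b a : maxbelow A Phi b a -> le b a.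
Proof. by case/andP=> /andP[]. Qed.

Lemma maxbelow_join_le a : le (maxbelow_join a) a.
Proof. by apply: (hbigjoin_lub HA) => b; exact: maxbelow_le. Qed.

(* The sum in [mu_loc] collapses by additivity of [mu] over the disjoint maximal elements below [a]. *)
Lemma mu_locE a x : le x m ->
  mu_loc A Phi mu a x = mu (meet x a) - mu (meet x (maxbelow_join a)).
Proof.
move=> xm; rewrite /mu_loc premeasure_meet_bigjoin ?undup_uniq //.
by move=> b b'; rewrite !mem_undup; exact: Phi_disjoint.
Qed.

Lemma mu_loc_le a x y : le x y -> le y m -> mu_loc A Phi mu a x <= mu_loc A Phi mu a y.
Proof.
move=> xy ym; have xm := hle_trans HA xy ym.
rewrite !mu_locE //; set J := maxbelow_join a.
(* Modularity on [x ∧ a] and [y ∧ J], whose meet is [x ∧ J] and whose join lies below [y ∧ a]. *)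
have meet_xa_yJ : meet (meet x a) (meet y J) = meet x J.
  apply: (hle_anti HA).
    apply: (hmeet_le2 HA (hmeet_lel HA _ _) (hmeet_ler HA _ _)).
  apply: (hmeet_glb HA).
    exact: (hmeet_le2 HA (hle_refl HA x) (maxbelow_join_le a)).
  exact: (hmeet_le2 HA xy (hle_refl HA J)).
have := premeasureU (hle_trans HA (hmeet_lel HA x a) xm) (hle_trans HA (hmeet_lel HA y J) ym).
rewrite meet_xa_yJ => mu_xa_yJ.
have : mu (join (meet x a) (meet y J)) <= mu (meet y a).
  apply: premeasure_le; last exact: (hle_trans HA (hmeet_lel HA y a) ym).
  apply: (hjoin_lub HA); first exact: (hmeet_le2 HA xy (hle_refl HA a)).
  exact: (hmeet_le2 HA (hle_refl HA y) (maxbelow_join_le a)).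
rewrite mu_xa_yJ; lra.
Qed.

Lemma mu_loc0 a : mu_loc A Phi mu a bot = 0.
Proof.
rewrite /mu_loc (hmeet0x HA) premeasure0 big1 ?subr0 // => b _.
by rewrite (hmeet0x HA) premeasure0.
Qed.

Lemma mu_loc_ge0 a x : le x m -> 0 <= mu_loc A Phi mu a x.
Proof. by move=> xm; rewrite -(mu_loc0 a); exact: mu_loc_le (hbot_le HA x) xm. Qed.

Lemma mu_locU a b c : le b m -> le c m ->
  mu_loc A Phi mu a (join b c)
  = mu_loc A Phi mu a b + mu_loc A Phi mu a c - mu_loc A Phi mu a (meet b c).
Proof.
move=> bm cm; have bcm : le (join b c) m by exact: (hjoin_lub HA).
have meet_bcm : le (meet b c) m by exact: (hle_trans HA (hmeet_lel HA b c) bm).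
rewrite !mu_locE // !premeasure_meetUl //; lra.
Qed.

End LocalMeasure.

Lemma mu_loc_meet (R : realType) (Ag : Type) (T : finType) (A : HAops Ag T)
    (mu : T -> R) (Phi : seq T) a x y : is_heyting A -> hle A a y ->
  mu_loc A Phi mu a (hmeet A x y) = mu_loc A Phi mu a x.
Proof.
move=> HA ay; have meet_xy_le c : hle A c y -> hmeet A (hmeet A x y) c = hmeet A x c.
  by move=> cy; rewrite -(hmeetA HA) [hmeet A y c](hmeetC HA) (hmeet_l HA cy).
rewrite /mu_loc meet_xy_le //; congr (_ - _); apply: eq_bigr => b b_max.
by rewrite meet_xy_le //; exact: (hle_trans HA (maxbelow_le b_max) ay).
Qed.

Section EventStructure.
Variables (Ag : Type) (T : finType) (A : HAops Ag T) (Phi : seq T).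
Local Notation lt := (hlt A).
Local Notation meet := (hmeet A).
Local Notation bot := (hbot A).

Lemma phi_onto b : b \in Phi -> exists k : 'I_(size Phi), phi A k = b.
Proof.
move=> bPhi; have ib : (index b Phi < size Phi)%N by rewrite index_mem.
by exists (Ordinal ib); rewrite /phi /= nth_index.
Qed.

Lemma maxbelow_nlt a b c :
  maxbelow A Phi b a -> maxbelow A Phi c a -> c \in Phi -> ~~ lt b c.
Proof.
case/andP=> _ /hasPn b_max /andP[ca _] cPhi; apply/negP => bc.
by move: (b_max c cPhi); rewrite bc ca.
Qed.

Lemma maxbelow_disjoint :
  (forall k l : 'I_(size Phi), phi A k != phi A l ->
     [\/ meet (phi A k) (phi A l) = bot, lt (phi A k) (phi A l) | lt (phi A l) (phi A k)]) ->
  forall a, {in Phi &, forall b b', maxbelow A Phi b a -> maxbelow A Phi b' a ->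
     b != b' -> meet b b' = bot}.
Proof.
move=> Phi_cmp a b b' /phi_onto[k <-] /phi_onto[l <-] k_max l_max /Phi_cmp[] // lt_kl.
  by rewrite (negbTE (maxbelow_nlt k_max l_max (mem_nth _ (ltn_ord l)))) in lt_kl.
by rewrite (negbTE (maxbelow_nlt l_max k_max (mem_nth _ (ltn_ord k)))) in lt_kl.
Qed.

End EventStructure.

Section IntermediateStructure.
Variables (R : realType) (Ag : Type) (T : finType) (A : HAops Ag T) (mu : Ag -> T -> R).
Variables (E : finType) (sim : Ag -> rel E) (P : Ag -> E -> R).
Variables (Phi : seq T) (pre : 'I_(size Phi) -> E -> R).
Local Notation PA := (prod_ops A sim).
Local Notation mu' := (mu_prime A P pre mu).

Lemma mu_prime_meet i (x y : {ffun E -> T}) : is_heyting A ->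
  (forall e, hle A (\big[hjoin A/hbot A]_(a <- Phi) a) (y e)) ->
  mu' i (hmeet PA x y) = mu' i x.
Proof.
move=> HA Phi_le_y; apply: eq_bigr => e _; apply: eq_bigr => k _.
rewrite ffunE mu_loc_meet //; apply: (hle_trans HA) (Phi_le_y e).
exact: (hbigjoin_ub HA id (mem_nth _ (ltn_ord k))).
Qed.

Hypothesis HM : is_monadic A.
Hypothesis sim_equiv :
  forall i, [/\ reflexive (sim i), symmetric (sim i) & transitive (sim i)].
Hypothesis P_ge0 : forall i e, 0 <= P i e.
Hypothesis pre_ge0 : forall k e, 0 <= pre k e.
Hypothesis Phi_disjoint : forall a,
  {in Phi &, forall b b', maxbelow A Phi b a -> maxbelow A Phi b' a ->
     b != b' -> hmeet A b b' = hbot A}.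
Local Notation HA := (monadic_heyting HM).

Lemma mu_prime_premeasure i : is_premeasure A i (mu i) -> is_premeasure PA i (mu' i).
Proof.
move=> mu_pre; split.
- move=> x /(in_dom_prod HM sim_equiv) x_dom.
  apply: sumr_ge0 => e _; apply: sumr_ge0 => k _; have [m [m_min xm]] := x_dom e.
  by rewrite !mulr_ge0 ?P_ge0 ?pre_ge0 // (mu_loc_ge0 HA mu_pre m_min).
- move=> x y _ /(in_dom_prod HM sim_equiv) y_dom /prod_leP xy.
  apply: ler_sum => e _; apply: ler_sum => k _; have [m [m_min ym]] := y_dom e.
  by rewrite ler_wpM2r ?pre_ge0 // ler_wpM2l ?P_ge0 // (mu_loc_le HA mu_pre m_min).
- move=> f b c f_min /prod_leP bf /prod_leP cf.
  rewrite -big_split -sumrB; apply: eq_bigr => e _.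
  rewrite -big_split -sumrB; apply: eq_bigr => k _.
  have [m [m_min fm]] := in_dom_prod_iminimal HM sim_equiv e f_min.
  rewrite !ffunE (mu_locU HA mu_pre m_min Phi_disjoint _ (hle_trans HA (bf e) fm)
    (hle_trans HA (cf e) fm)) /=.
  by ring.
- case=> _ [f [f_min _]]; have [m m_min] := prod_iminimal_exists HM sim_equiv f_min.
  rewrite /mu_prime big1 // => e _; rewrite big1 // => k _.
  by rewrite ffunE (mu_loc0 HA mu_pre m_min) mulr0 mul0r.
Qed.

End IntermediateStructure.

Theorem proposition6 (R : realType) (Ag : Type) (T : finType) (A : HAops Ag T)
    (mu : Ag -> T -> R) (E : finType) (sim : Ag -> rel E) (P : Ag -> E -> R)
    (Phi : seq T) (pre : 'I_(size Phi) -> E -> R) :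
  is_APE A mu ->
  is_prob_event_structure A sim P pre ->
  is_ApPE (prod_ops A sim) (mu_prime A P pre mu) /\
  (forall y : {ffun E -> T},
     (forall e : E, hle A (\big[hjoin A / hbot A]_(a <- Phi) a) (y e)) ->
     forall (i : Ag) (x : {ffun E -> T}),
       in_dom (prod_ops A sim) i x ->
       mu_prime A P pre mu i x
       = mu_prime A P pre mu i (hmeet (prod_ops A sim) x y)).
Proof.
move=> [A_epi mu_meas] [_ [sim_equiv [P_range [_ [Phi_cmp [pre_ge0 _]]]]]].
have HM : is_monadic A by case: A_epi.
split; last by move=> y Phi_le_y i x _; rewrite mu_prime_meet //; exact: monadic_heyting.
split; first exact: prod_epistemic.
move=> i; have [mu_pre _ _] := mu_meas i.
apply: mu_prime_premeasure => //; last exact: maxbelow_disjoint.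
by move=> j e; case/andP: (P_range j e) => /ltW.
Qed.
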